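(* Let $\mathcal{M}=\langle\mathcal{X},X_W,\Phi,\mathcal{B}\rangle$ be a system of constraints with $\mathcal{B}=\langle V,F,E\rangle$, let $\langle T_I,T_C,T_O\rangle$ be the coarse decomposition of the subgraph of $\mathcal{B}$ induced by $(V\setminus W)\cup F$, and let $\mathrm{CO}(\mathcal{B})$ be the causal ordering graph. Suppose $\mathcal{M}$ is maximally uniquely solvable w.r.t. $\mathrm{CO}(\mathcal{B})$ and let $X^*=g(X_W)$ be a solution of $\mathcal{M}$. Let $f\in(T_C\cup T_O)\cap F$, let $\phi'_f:\mathcal{X}_{V(f)}\to\mathcal{Y}$ be measurable and $c'_f\in\mathcal{Y}$, and assume the intervened system $\mathcal{M}_{\mathrm{si}(f,\phi'_f,c'_f)}$ is also maximally uniquely solvable w.r.t. $\mathrm{CO}(\mathcal{B})$; let $X'=h(X_W)$ be a solution of it. If there is no directed path from $f$ to $v\in(T_C\cup T_O)\cap V$ in $\mathrm{CO}(\mathcal{B})$, then $X^*_v=X'_v$ almost surely. (If there is a directed path from $f$ to $v$, then $X^*_v$ may have a different distribution than $X'_v$, depending on the details of $\mathcal{M}$.)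
   Context: System of constraints $\langle\mathcal{X},X_W,\Phi,\mathcal{B}\rangle$: $\mathcal{X}=\bigotimes_{v\in V}\mathcal{X}_v$ standard measurable spaces; $W\subseteq V$ and $X_W=(X_w)_{w\in W}$ independent random variables; $\Phi=(\Phi_f)_{f\in F}$, $\Phi_f=\langle\phi_f,c_f,V(f)\rangle$, $V(f)\subseteq V$, $c_f$ a constant in a standard measurable space $\mathcal{Y}$, $\phi_f:\mathcal{X}_{V(f)}\to\mathcal{Y}$ measurable; $\mathcal{B}=\langle V,F,E\rangle$ with $E=\{(f-v):v\in V(f)\}$; $V(S_F)=\bigcup_{f\in S_F}V(f)$. A solution is a measurable $g:\mathcal{X}_W\to\mathcal{X}_{V\setminus W}$ with $\phi_f(g_{V(f)\setminus W}(X_W),X_{V(f)\cap W})=c_f$ for all $f$, a.s. Solvable w.r.t. $S_F\subseteq F$, $S_V\subseteq V(S_F)\setminus W$: there is a measurable $g_{S_V}:\mathcal{X}_{V(S_F)\setminus S_V}\to\mathcal{X}_{S_V}$ such that a.s., for all $x_{V(S_F)\setminus W}$, $x_{S_V}=g_{S_V}(x_{V(S_F)\setminus(S_V\cup W)},X_{V(S_F)\cap W})$ implies $\phi_f(x_{V(f)\setminus W},X_{V(f)\cap W})=c_f$ for all $f\in S_F$; uniquely solvable if also the converse holds. Soft intervention: $\mathcal{M}_{\mathrm{si}(f,\phi'_f,c'_f)}$ is $\mathcal{M}$ with $\Phi_f$ replaced by $\langle\phi'_f,c'_f,V(f)\rangle$ (same bipartite graph). Graph notions: $\mathrm{adj}(X)$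 = neighbours of $X$; $F'\subseteq F$ self-contained if $|F'|=|\mathrm{adj}(F')|$ and $|F''|\le|\mathrm{adj}(F'')|$ for $F''\subseteq F'$; a bipartite graph is self-contained if both sides have equal size and the constraint side is self-contained; minimal self-contained = non-empty self-contained without non-empty strict self-contained subset. For a maximum matching $M$ of a bipartite graph, an alternating path is a sequence of distinct vertices (possibly one) with consecutive vertices adjacent and edges alternating between not in $M$ and in $M$; the coarse decomposition is $T_I$ = vertices joined by an alternating path to an unmatched variable vertex, $T_O$ = vertices joined by an alternating path to an unmatched constraint vertex, $T_C$ = remaining vertices (independent of $M$). Causal ordering graph $\mathrm{CO}(\mathcal{B})=\langle\mathcal{V},\mathcal{E}\rangle$: a partition $\mathcal{V}$ of $V\cup F$ into clusters and edges $x\to C$ from vertices to clusters ($\mathrm{cl}(x)$ is the cluster of $x$), constructed as follows. Let $\mathcal{B}'$ be the subgraph induced by $(V\setminus W)\cup F$ with coarse decomposition $\langle T_I,T_C,T_O\rangle$ and induced subgraphs $\mathcal{B}_I,\mathcal{B}_C,\mathcal{B}_O$. On $\mathcal{B}_C$ run: while the current graph $\mathcal{B}''$ is non-null, choose a minimal self-contained set $S_F$ of $\mathcal{B}''$, form cluster $C=S_F\cup\mathrm{adj}_{\mathcal{B}''}(S_F)$, add edges $v\to C$ for $v\in\mathrm{adj}_{\mathcal{B}_C}(S_F)\setminus\mathrm{adj}_{\mathcal{B}''}(S_F)$, and delete $C$. Clusters: these, the connected components of $\mathcal{B}_I$ and of $\mathcal{B}_O$, and $\{w\}$ for $w\in W$.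 Further edges: $v\to\mathrm{cl}(f)$ for each edge $(v-f)$ with $v\in(T_O\cup T_C)\cap V$, $f\in T_I\cap F$, or $v\in T_O\cap V$, $f\in T_C\cap F$; and $w\to\mathrm{cl}(f)$ for each $w\in W$ and $f\in\mathrm{adj}_{\mathcal{B}}(w)$. A directed path from $x$ to $y$ in $\mathrm{CO}(\mathcal{B})$ exists if $\mathrm{cl}(x)=\mathrm{cl}(y)$ or there is a sequence of clusters $V_1=\mathrm{cl}(x),V_2,\dots,V_k=\mathrm{cl}(y)$ such that for each $i<k$ some $z_i\in V_i$ has $(z_i\to V_{i+1})\in\mathcal{E}$. Maximally uniquely solvable w.r.t. $\mathrm{CO}(\mathcal{B})$: uniquely solvable w.r.t. $S\cap F$ and $S\cap V$ for every cluster $S$ with $S\cap W=\emptyset$ and $S\cap T_I=\emptyset$, and solvable w.r.t. $T_I\cap F$ and $(T_I\cap V)\setminus W$. *)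

From HB Require Import structures.
From mathcomp Require Import all_boot all_order all_algebra.
From mathcomp Require Import all_classical all_reals all_analysis.

Set Implicit Arguments.
Unset Strict Implicit.
Unset Printing Implicit Defensive.

Import Order.TTheory GRing.Theory Num.Theory.

(*  Graph part.  The bipartite graph B = <V, F, E> is given by the map       *)
(*  Vf : F -> {set V} (V(f)); its edges are (f - v) for v \in Vf f.          *)
Section Graph.
Variables (V F : finType) (Vf : F -> {set V}).

Definition vert := (V + F)%type.

Definition adjB (x y : vert) : bool :=
  match x, y with
  | inl v, inr f => v \in Vf f
  | inr f, inl v => v \in Vf f
  | _, _ => false
  end.

Definition adjS (S : {set vert}) (x y : vert) : bool :=
  [&& x \in S, y \in S & adjB x y].

Definition Vpart (S : {set vert}) : {set V} := [set v | inl v \in S].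
Definition Fpart (S : {set vert}) : {set F} := [set f | inr f \in S].

Definition Bprime (W : {set V}) : {set vert} :=
  [set x | if x is inl v then v \notin W else true].

Definition is_matching (S : {set vert}) (M : {set F * V}) : Prop :=
  (forall p, p \in M -> [&& inr p.1 \in S, inl p.2 \in S & p.2 \in Vf p.1]) /\
  (forall p q, p \in M -> q \in M -> p != q -> (p.1 != q.1) && (p.2 != q.2)).

Definition is_max_matching (S : {set vert}) (M : {set F * V}) : Prop :=
  is_matching S M /\ forall M', is_matching S M' -> #|M'| <= #|M|.

Definition inM (M : {set F * V}) (x y : vert) : bool :=
  match x, y with
  | inl v, inr f => (f, v) \in M
  | inr f, inl v => (f, v) \in M
  | _, _ => false
  end.

Definition matched (M : {set F * V}) (x : vert) : Prop := exists y, inM M x y.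

(* alternating walk starting at x: consecutive vertices adjacent in S, the
   i-th edge (i = 0, 1, ...) is in M iff i is odd *)
Fixpoint alt_from (S : {set vert}) (M : {set F * V}) (b : bool) (x : vert)
    (s : seq vert) : bool :=
  match s with
  | [::] => true
  | y :: s' => [&& adjS S x y, inM M x y == b & alt_from S M (~~ b) y s']
  end.

Definition alt_path (S : {set vert}) (M : {set F * V}) (x : vert) (s : seq vert)
  : bool := [&& x \in S, uniq (x :: s) & alt_from S M false x s].

Definition alt_reach (S : {set vert}) (M : {set F * V}) (kind : vert -> bool)
  (x : vert) : Prop :=
  exists u s, [/\ kind u, ~ matched M u, alt_path S M u s & last u s = x].

Definition is_var (x : vert) : bool := if x is inl _ then true else false.
Definition is_con (x : vert) : bool := if x is inr _ then true else false.

Definition T_I (S : {set vert}) (M : {set F * V}) : {set vert} :=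
  [set x | `[< alt_reach S M is_var x >] ].
Definition T_O (S : {set vert}) (M : {set F * V}) : {set vert} :=
  [set x | `[< alt_reach S M is_con x >] ].
Definition T_C (S : {set vert}) (M : {set F * V}) : {set vert} :=
  S :\: (T_I S M :|: T_O S M).

Definition adjF (S : {set vert}) (A : {set F}) : {set V} :=
  [set v | (inl v \in S) && [exists f in A, v \in Vf f]].

Definition self_contained (S : {set vert}) (A : {set F}) : bool :=
  [&& A \subset Fpart S, #|A| == #|adjF S A| &
      [forall A' : {set F}, (A' \subset A) ==> (#|A'| <= #|adjF S A'|)]].

Definition min_self_contained (S : {set vert}) (A : {set F}) : bool :=
  [&& A != finset.set0, self_contained S A &
      [forall A' : {set F}, ((A' != finset.set0) && (A' \proper A)) ==>
                            ~~ self_contained S A']].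

Definition mkcluster (S : {set vert}) (A : {set F}) : {set vert} :=
  (inr @: A) :|: (inl @: adjF S A).

(* A run of the algorithm on B_C (vertex set TC): the list of the chosen
   minimal self-contained sets.  [TC_run TC cur rs] : starting from the current
   graph induced on cur, each chosen set is minimal self-contained in the
   current graph, and the graph is null at the end. *)
Fixpoint TC_run (cur : {set vert}) (rs : seq {set F}) : bool :=
  match rs with
  | [::] => cur == finset.set0
  | A :: rs' => min_self_contained cur A && TC_run (cur :\: mkcluster cur A) rs'
  end.

(* clusters produced by the run, each with the set of variables v having an
   edge v -> C, i.e. adj_{B_C}(S_F) \ adj_{B''}(S_F) *)
Fixpoint TC_clusters (TC cur : {set vert}) (rs : seq {set F})
  : seq ({set vert} * {set V}) :=
  match rs with
  | [::] => [::]
  | A :: rs' => (mkcluster cur A, adjF TC A :\: adjF cur A)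
                :: TC_clusters TC (cur :\: mkcluster cur A) rs'
  end.

Definition components (S : {set vert}) : {set {set vert}} :=
  [set [set y in S | connect (adjS S) x y] | x in S].

Section CO.
Variables (W : {set V}) (M : {set F * V}) (rs : seq {set F}).

Definition TI := T_I (Bprime W) M.
Definition TC := T_C (Bprime W) M.
Definition TO := T_O (Bprime W) M.

Definition TCcl := TC_clusters TC TC rs.

Definition clusters : {set {set vert}} :=
  [set C | C \in [seq p.1 | p <- TCcl]] :|: components TI :|: components TO
  :|: [set [set inl w] | w in W].

Definition co_edge (z : vert) (C : {set vert}) : bool :=
  (C \in clusters) &&
  [|| has (fun p : {set vert} * {set V} => (p.1 == C) && [exists v in p.2, z == inl v]) TCcl,
      [exists f, (inr f \in C) && [exists v, [&& z == inl v, v \in Vf f &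
          ((inl v \in TO :|: TC) && (inr f \in TI))
          || ((inl v \in TO) && (inr f \in TC))]]]
    | [exists f, (inr f \in C) &&
                 [exists w in W, (z == inl w) && (w \in Vf f)]]].

Definition cl_rel (C D : {set vert}) : bool :=
  [&& C \in clusters, D \in clusters & [exists z in C, co_edge z D]].

Definition co_path (x y : vert) : Prop :=
  exists Cx Cy, [/\ Cx \in clusters, Cy \in clusters, x \in Cx, y \in Cy
                  & connect cl_rel Cx Cy].

End CO.
End Graph.

Local Open Scope classical_set_scope.
Local Open Scope ereal_scope.

(* standard measurable (= standard Borel) space: measurably isomorphic to a
   Borel subset of the real line *)
Definition standard (R : realType) (d : measure_display) (T : measurableType d)
  : Prop :=
  exists (e : T -> R) (B : set R),
    [/\ measurable B, e @` setT = B, injective e, measurable_fun setT e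
      & forall A, measurable A -> measurable (e @` A)].

Section System.
Variables (R : realType) (V : finType) (d : V -> measure_display)
  (T : forall v, measurableType (d v)).

(* elements of the product X = \otimes_v X_v; an element of X_S (S a subset of
   V) is represented by a full assignment, and functions on X_S by functions
   on full assignments that only depend on the coordinates in S *)
Definition assign := forall v, T v.

(* the product sigma-algebra of X_S, pulled back to full assignments: the
   sigma-algebra generated by the cylinders {x | x v \in A}, v \in S *)
Definition cylinders (S : {set V}) : set (set assign) :=
  fun B => exists v (A : set (T v)), [/\ v \in S, measurable A
                                      & B = [set x : assign | A (x v)]].

Definition prod_measurable (S : {set V}) : set (set assign) :=
  <<s cylinders S >>.

Definition depends_only (Z : Type) (S : {set V}) (h : assign -> Z) : Prop :=
  forall x y : assign, (forall v, v \in S -> x v = y v) -> h x = h y.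

Definition meas_map (dZ : measure_display) (Z : measurableType dZ)
  (S : {set V}) (h : assign -> Z) : Prop :=
  depends_only S h /\
  forall B : set Z, measurable B -> prod_measurable S (h @^-1` B).

Definition meas_map_to (S U : {set V}) (g : assign -> assign) : Prop :=
  forall v, v \in U ->
    depends_only S (fun x => g x v) /\
    forall B : set (T v), measurable B ->
      prod_measurable S ((fun x => g x v) @^-1` B).

Definition merge (W : {set V}) (a b : assign) : assign :=
  fun v => if v \in W then a v else b v.

Variables (dO : measure_display) (Omega : measurableType dO)
  (P : probability Omega R).

Definition independent (W : {set V}) (X : forall v, Omega -> T v) : Prop :=
  forall A : forall w, set (T w), (forall w, w \in W -> measurable (A w)) ->
    P [set o | forall w, w \in W -> A w (X w o)] =
    \prod_(w in W) P (X w @^-1` A w).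

Definition joint (X : forall v, Omega -> T v) (o : Omega) : assign :=
  fun v => X v o.

Variables (F : finType) (Vf : F -> {set V}) (W : {set V})
  (X : forall v, Omega -> T v) (dY : measure_display) (Y : measurableType dY).

Definition VS (SF : {set F}) : {set V} := (\bigcup_(f in SF) Vf f)%SET.

Definition is_solution (phi : F -> assign -> Y) (c : F -> Y)
  (g : assign -> assign) : Prop :=
  meas_map_to W (~: W) g /\
  {ae P, forall o, forall f, phi f (merge W (joint X o) (g (joint X o))) = c f}.

Definition solv_cond (unique : bool) (phi : F -> assign -> Y) (c : F -> Y)
  (SF : {set F}) (SV : {set V}) (gS : assign -> assign) : Prop :=
  meas_map_to (VS SF :\: SV) SV gS /\
  {ae P, forall o, forall x : assign,
      let z := merge W (joint X o) x in
      let lhs := forall v, v \in SV -> z v = gS z v in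
      let rhs := forall f, f \in SF -> phi f z = c f in
      if unique then (lhs <-> rhs) else (lhs -> rhs)}.

Definition solvable phi c SF SV : Prop :=
  exists gS, solv_cond false phi c SF SV gS.

Definition uniquely_solvable phi c SF SV : Prop :=
  exists gS, solv_cond true phi c SF SV gS.

Definition max_uniq_solvable (M : {set F * V}) (rs : seq {set F})
  (phi : F -> assign -> Y) (c : F -> Y) : Prop :=
  (forall S, S \in clusters Vf W M rs ->
     (S :&: (inl @: W) == finset.set0) -> (S :&: TI Vf W M == finset.set0) ->
     uniquely_solvable phi c (Fpart S) (Vpart S)) /\
  solvable phi c (Fpart (TI Vf W M)) (Vpart (TI Vf W M) :\: W).

Definition soft_int (A : Type) (f : F) (a' : A) (a : F -> A) : F -> A :=
  fun g => if g == f then a' else a g.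

End System.

From Pilot Require Import Defs.
From HB Require Import structures.
From mathcomp Require Import all_boot all_order all_algebra.
From mathcomp Require Import all_classical all_reals all_analysis.

(* Order the clusters of CO(B) that avoid T_I: first the connected components
   of T_O, whose inputs all lie in W (a constraint of T_O only has neighbours
   in T_O or W), then the clusters of T_C in the order of the run, whose inputs
   lie in W, in T_O, or in earlier clusters, each input having an edge into the
   cluster.  Unique solvability of a cluster says that, almost surely, its
   variables are determined by its inputs through its constraints.  If the
   cluster of v is not reachable from f, then neither is any cluster feeding
   it, none of them contains f, so their constraints coincide in both systems,
   and X^* and X' agree on them by induction along this order.  That T_O
   clusters avoid T_I is the usual fact that T_I and T_O are disjoint for a
   maximum matching: an alternating path from an unmatched constraint to an
   unmatched variable would be augmenting. *)

Set Implicit Arguments.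
Unset Strict Implicit.
Unset Printing Implicit Defensive.

Section AlternatingPaths.
Variables (V F : finType) (Vf : F -> {set V}).
Local Notation vert := (vert V F).
Implicit Types (S : {set vert}) (M : {set F * V}) (x y u : vert) (s q : seq vert)
  (kind : pred vert).

Lemma adjB_sym x y : adjB Vf x y = adjB Vf y x.
Proof. by case: x; case: y. Qed.

Lemma adjS_sym S x y : adjS Vf S x y = adjS Vf S y x.
Proof. by rewrite /adjS adjB_sym andbCA. Qed.

Lemma inM_sym M x y : inM M x y = inM M y x.
Proof. by case: x; case: y. Qed.

Lemma adjB_is_var x y : adjB Vf x y -> is_var y = ~~ is_var x.
Proof. by case: x; case: y. Qed.

Lemma is_var_con x : is_con x -> is_var x = false.
Proof. by case: x. Qed.

Lemma alt_from_cat S M b x s t :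
  alt_from Vf S M b x (s ++ t) =
  alt_from Vf S M b x s && alt_from Vf S M (b (+) odd (size s)) (last x s) t.
Proof.
elim: s b x => [|y s IH] b x /=; first by rewrite addbF.
by rewrite IH -!andbA addbN negb_add.
Qed.

Lemma alt_from_is_var S M b x s :
  alt_from Vf S M b x s -> is_var (last x s) = is_var x (+) odd (size s).
Proof.
elim: s b x => [|y s IH] b x /=; first by rewrite addbF.
case/and3P=> /and3P[_ _ /adjB_is_var xy] _ /IH ->.
by rewrite xy addbN negb_add.
Qed.

Lemma alt_from_sub S M b x s : alt_from Vf S M b x s -> {subset s <= S}.
Proof.
elim: s b x => [|y s IH] b x //= /and3P[/and3P[_ yS _] _ /IH sS] z.
by rewrite inE => /predU1P[->|/sS].
Qed.

Lemma alt_path_sub S M x s : alt_path Vf S M x s -> {subset x :: s <= S}.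
Proof.
by case/and3P=> xS _ /alt_from_sub sS z; rewrite inE => /predU1P[->|/sS].
Qed.

Lemma alt_from_eq_inM S M M' b x s :
  {in x :: s &, inM M' =2 inM M} ->
  alt_from Vf S M' b x s = alt_from Vf S M b x s.
Proof.
elim: s b x => [|y s IH] b x //= eqM.
rewrite eqM ?inE ?eqxx ?orbT // IH // => a c a_s c_s.
by apply: eqM; rewrite inE ?a_s ?c_s orbT.
Qed.

Definition alt_seq S M b q := if q is x :: s then alt_from Vf S M b x s else true.

Lemma alt_seq_cat S M b q1 y q2 :
  alt_seq S M b (rcons q1 y ++ q2) =
  alt_seq S M b (rcons q1 y) && alt_seq S M (b (+) odd (size q1)) (y :: q2).
Proof.
case: q1 => [|x q1] /=; first by rewrite addbF.
by rewrite alt_from_cat last_rcons size_rcons.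
Qed.

(* The last edge of [q] has index [size q - 2], of parity [odd (size q)]. *)
Lemma alt_seq_rev S M b q :
  alt_seq S M b q = alt_seq S M (b (+) odd (size q)) (rev q).
Proof.
elim: q b => [|x [|y q] IH] b //=.
have -> : rev [:: x, y & q] = rcons (rev q) y ++ [:: x].
  by rewrite rev_cons rev_cons cats1.
rewrite alt_seq_cat -rev_cons.
have -> : b (+) odd (size [:: x, y & q]) = ~~ b (+) odd (size (y :: q)).
  by rewrite /= negbK addNb addbN negbK.
rewrite -IH /= size_rev adjS_sym inM_sym andbT addNb addbN negbK addbK.
by case: alt_from; rewrite ?andbT ?andbF.
Qed.

Lemma alt_seq_is_var S M b q y :
  alt_seq S M b (rcons q y) -> is_var y = is_var (head y q) (+) odd (size q).
Proof.
case: q => [|x q] /=; first by rewrite addbF.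
by move/alt_from_is_var; rewrite last_rcons size_rcons.
Qed.

Lemma matching_partner_uniq S M x y z :
  is_matching Vf S M -> inM M x y -> inM M x z -> y = z.
Proof.
case=> _ mM; case: x => [w|g]; case: y => [w1|g1] //; case: z => [w2|g2] //=.
- move=> h1 h2; have [[->]//|ne] := eqVneq (g1, w) (g2, w).
  by have /andP[_] := mM _ _ h1 h2 ne; rewrite eqxx.
- move=> h1 h2; have [[->]//|ne] := eqVneq (g, w1) (g, w2).
  by have /andP[] := mM _ _ h1 h2 ne; rewrite eqxx.
Qed.

Lemma matching_sub S M M' : is_matching Vf S M -> M' \subset M -> is_matching Vf S M'.
Proof.
case=> h1 h2 /fintype.subsetP sM.
by split=> [p /sM|p q /sM pM /sM qM]; [exact: h1|exact: h2].
Qed.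

Lemma unmatched_con M f0 : ~ matched M (inr f0) -> forall p, p \in M -> p.1 != f0.
Proof.
by move=> nm [g w] pM; apply/eqP=> /= gf; apply: nm; exists (inl w); rewrite /= -gf.
Qed.

Lemma unmatched_var M v : ~ matched M (inl v) -> forall p, p \in M -> p.2 != v.
Proof.
by move=> nm [g w] pM; apply/eqP=> /= wv; apply: nm; exists (inr g); rewrite /= -wv.
Qed.

Lemma matching_add S M f0 v1 : is_matching Vf S M ->
  (forall p, p \in M -> p.1 != f0) -> (forall p, p \in M -> p.2 != v1) ->
  inr f0 \in S -> inl v1 \in S -> v1 \in Vf f0 ->
  is_matching Vf S ((f0, v1) |: M).
Proof.
case=> h1 h2 f0M v1M f0S v1S v1f0; split.
  by move=> p; rewrite in_setU1 => /predU1P[->|/h1//]; rewrite /= f0S v1S v1f0.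
move=> p q; rewrite !in_setU1 => /predU1P[->|pM] /predU1P[->|qM] //.
- by rewrite eqxx.
- by move=> _ /=; rewrite eq_sym (f0M _ qM) eq_sym (v1M _ qM).
- by move=> _ /=; rewrite (f0M _ pM) (v1M _ pM).
- exact: h2.
Qed.

Lemma inM_swap M f0 f2 v1 x y : x != inl v1 -> y != inl v1 ->
  inM ((f0, v1) |: (M :\ (f2, v1))) x y = inM M x y.
Proof.
case: x => [w|g]; case: y => [w'|g'] //= xv yv;
  rewrite in_setU1 in_setD1 !xpair_eqE.
- have /negbTE-> : w != v1 by apply: contra xv => /eqP->.
  by rewrite !andbF.
- have /negbTE-> : w' != v1 by apply: contra yv => /eqP->.
  by rewrite !andbF.
Qed.

Lemma matching_swap S M f0 f2 v1 : is_matching Vf S M ->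
  ~ matched M (inr f0) -> inr f0 \in S -> v1 \in Vf f0 -> (f2, v1) \in M ->
  f2 != f0 ->
  let M1 := (f0, v1) |: (M :\ (f2, v1)) in
  [/\ is_matching Vf S M1, #|M1| = #|M| & ~ matched M1 (inr f2)].
Proof.
move=> mM nm0 f0S v1f0 f2v1 f2f0 M1; have f0M := unmatched_con nm0.
have f0v1 : (f0, v1) \notin M :\ (f2, v1).
  by rewrite in_setD1 negb_and; apply/orP; right; apply/negP=> /f0M; rewrite eqxx.
split.
- apply: matching_add => //.
  + exact: matching_sub mM (subD1set _ _).
  + by move=> p; rewrite in_setD1 => /andP[_ /f0M].
  + move=> p; rewrite in_setD1 => /andP[ne pM].
    by case/andP: (mM.2 _ _ pM f2v1 ne).
  + by have /and3P[] := mM.1 _ f2v1.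
- by rewrite cardsU1 f0v1 (cardsD1 (f2, v1) M) f2v1.
- case=> -[w|//] /=; rewrite in_setU1 in_setD1 => /predU1P[[e _]|/andP[ne wM]].
    by rewrite e eqxx in f2f0.
  by case/andP: (mM.2 _ _ wM f2v1 ne); rewrite eqxx.
Qed.

Lemma augmenting_path S M u s : is_matching Vf S M -> is_con u -> ~ matched M u ->
  uniq (u :: s) -> alt_from Vf S M false u s ->
  is_var (last u s) -> ~ matched M (last u s) ->
  exists2 M', is_matching Vf S M' & #|M| < #|M'|.
Proof.
have [n] := ubnP (size s); elim: n => // n IH in M u s *.
rewrite ltnS => sz mM; case: u => // f0 _ nm0.
case: s sz => [|[v1|g] s] //= sz; last by rewrite /adjS !andbF.
case: s sz => [|[w|f2] s] sz /=.
- move=> _ /andP[/and3P[f0S v1S v1f0] _] _ nm1.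
  exists ((f0, v1) |: M).
    by apply: matching_add => //; [exact: unmatched_con | exact: unmatched_var].
  by rewrite cardsU1 -add1n leq_add2r lt0b; apply/negP=> /(unmatched_con nm0)/eqP.
- by rewrite /adjS !andbF.
rewrite !inE !negb_or.
case/and4P=> /and3P[_ f0f2 _] /andP[_ v1s] f2s uniq_s.
case/and5P=> /and3P[f0S _ v1f0] _ _ /eqP f2v1 alt_s last_var nm_last.
have {}f0f2 : f2 != f0 by apply: contraNneq f0f2 => ->.
have [mM1 card_M1 nm2] := matching_swap mM nm0 f0S v1f0 f2v1 f0f2.
set M1 := _ |: _ in mM1 card_M1 nm2.
have not_v1 a : a \in inr f2 :: s -> a != inl v1.
  by rewrite inE => /predU1P[->//|a_s]; apply: contraNneq v1s => <-.
rewrite -card_M1; apply: (IH M1 (inr f2) s) => //.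
- exact: leq_ltn_trans (leqnSn _) sz.
- by rewrite /= f2s uniq_s.
- by rewrite (@alt_from_eq_inM _ M M1) // => a c /not_v1 ? /not_v1 ?; apply: inM_swap.
- case=> y; have lv1 := not_v1 _ (mem_last (inr f2) s).
  case: y => [w|g]; first by move: last_var; case: (last _ s).
  by rewrite inM_swap // => ?; apply: nm_last; exists (inr g).
Qed.

(* Follow the second path up to its first vertex [y] on the first one, then
   the first path back; [y] has opposite parities on the two paths. *)
Lemma alt_paths_join S M u1 s1 u2 s2 :
  alt_path Vf S M u1 s1 -> alt_path Vf S M u2 s2 -> last u2 s2 = last u1 s1 ->
  is_var u1 -> is_con u2 ->
  exists s, [/\ uniq (u2 :: s), alt_from Vf S M false u2 s & last u2 s = u1].
Proof.
move=> /and3P[_ un1 a1] /and3P[_ un2 a2] l21 var1 con2.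
have meet : has (mem (u1 :: s1)) (u2 :: s2).
  by apply/hasP; exists (last u2 s2); [exact: mem_last | rewrite /= l21 mem_last].
have h1 : head u1 (u1 :: s1) = u1 by [].
have h2 : head u2 (u2 :: s2) = u2 by [].
have {a2}: alt_seq S M false (u2 :: s2) by [].
have {a1}: alt_seq S M false (u1 :: s1) by [].
move: (u1 :: s1) (u2 :: s2) un1 un2 h1 h2 meet => q1 q2 + + + + meet.
case/split_find: meet => y pre2 post2 y_q1 pre2_q1.
case/splitPr: y_q1 pre2_q1 => pre1 post1 pre2_q1; rewrite -cat_rcons in pre2_q1 *.
move=> un1 un2 h1 h2 /[!alt_seq_cat] /andP[a1 _] /andP[a2 _].
have odd_pre : odd (size pre2) = ~~ odd (size pre1).
  move: (alt_seq_is_var a1) (alt_seq_is_var a2).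
  have -> : head y pre1 = u1 by case: pre1 {a1 un1 pre2_q1} h1.
  have -> : head y pre2 = u2 by case: pre2 {a2 un2 pre2_q1} h2.
  by rewrite var1 (is_var_con con2) => -> /= ->.
have head2 : rcons pre2 y = u2 :: behead (rcons pre2 y).
  by case: pre2 {a2 un2 pre2_q1 odd_pre} h2 => [|a l] /= <-.
have last1 : last y (rev pre1) = u1.
  by case: pre1 {a1 un1 pre2_q1 odd_pre} h1 => //= a l <-; rewrite rev_cons last_rcons.
set q := rcons pre2 y ++ rev pre1.
have alt_q : alt_seq S M false q.
  rewrite alt_seq_cat a2 odd_pre.
  by move: a1; rewrite alt_seq_rev size_rcons rev_rcons.
have uniq_q : uniq q.
  rewrite cat_uniq rev_uniq; apply/and3P; split.
  - by move: un2; rewrite cat_uniq => /andP[].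
  - apply/hasP=> -[z]; rewrite mem_rev mem_rcons inE => z_pre1 /predU1P[ezy|z_pre2].
      by move: un1; rewrite cat_uniq rcons_uniq -ezy z_pre1.
    apply: (negP pre2_q1); apply/hasP; exists z => //=.
    by rewrite mem_cat mem_rcons inE z_pre1 orbT.
  - by move: un1; rewrite cat_uniq rcons_uniq => /and3P[/andP[]].
have q_def : q = u2 :: behead q by rewrite /q head2.
exists (behead q); rewrite -q_def; split=> //; first by rewrite q_def in alt_q.
by rewrite -[last u2 _]/(last y (u2 :: behead q)) -q_def last_cat last_rcons.
Qed.

Lemma max_matching_reach_disjoint S M x : is_max_matching Vf S M ->
  alt_reach Vf S M (@is_var V F) x -> alt_reach Vf S M (@is_con V F) x -> False.
Proof.
move=> [mM maxM] [u1 [s1 [var1 nm1 p1 <-]]] [u2 [s2 [con2 nm2 p2 last21]]].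
have [s [uniq_s alt_s last_s]] := alt_paths_join p1 p2 last21 var1 con2.
move: (augmenting_path mM con2 nm2 uniq_s alt_s).
rewrite last_s => /(_ var1 nm1)[M' mM' ltM].
by have := maxM _ mM'; rewrite leqNgt ltM.
Qed.

Lemma alt_reach_in S M kind x : alt_reach Vf S M kind x -> x \in S.
Proof. by case=> u [s [_ _ /alt_path_sub us <-]]; apply/us/mem_last. Qed.

Lemma alt_reach_prefix S M kind u s y : kind u -> ~ matched M u ->
  alt_path Vf S M u s -> y \in u :: s -> alt_reach Vf S M kind y.
Proof.
move=> ku nmu /and3P[uS un alt]; rewrite inE => /predU1P[->|y_s].
  by exists u, [::]; split=> //; rewrite /alt_path uS.
case/splitPr: y_s un alt => s1 s2; rewrite -cat_rcons -cat_cons cat_uniq alt_from_cat.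
move=> /andP[un _] /andP[alt _]; exists u, (rcons s1 y).
by split; rewrite ?last_rcons // /alt_path uS un alt.
Qed.

(* A vertex reached by an even alternating path can be left along any
   non-matching edge, and its matching edge leads back onto the path. *)
Lemma alt_reach_adj S M kind x y : is_matching Vf S M ->
  alt_reach Vf S M kind x -> (forall u, kind u -> is_var u = is_var x) ->
  y \in S -> adjB Vf x y -> alt_reach Vf S M kind y.
Proof.
move=> mM [u [s [ku nmu pu <-]]] kind_var yS xy.
have [y_path|y_new] := boolP (y \in u :: s); first exact: alt_reach_prefix pu y_path.
have /and3P[uS un alt] := pu.
have even_s : odd (size s) = false.
  move: (alt_from_is_var alt); rewrite -(kind_var _ ku).
  by case: (is_var u); case: (odd _).
have xS : last u s \in S by apply: (alt_path_sub pu); exact: mem_last.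
have not_inM : inM M (last u s) y = false.
  apply/negP=> xyM; move: alt y_new even_s.
  case/lastP: s {pu un xS kind_var xy} xyM => [xyM|s0 x'] /=.
    by move=> _ _ _; apply: nmu; exists y.
  rewrite last_rcons -cats1 alt_from_cat size_cat addn1 /= andbT => xyM.
  case/and3P=> _ _ /eqP x'M /negP y_new /negbFE odd_s0; apply: y_new.
  rewrite -cat_cons mem_cat (matching_partner_uniq mM xyM (_ : inM M x' (last u s0))).
    by rewrite mem_last.
  by rewrite inM_sym x'M odd_s0.
exists u, (rcons s y); split; rewrite ?last_rcons //.
rewrite /alt_path uS -rcons_cons rcons_uniq y_new un -cats1 alt_from_cat alt /=.
by rewrite even_s not_inM /adjS xS yS xy.
Qed.

End AlternatingPaths.

Section Clusters.
Variables (V F : finType) (Vf : F -> {set V}).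
Local Notation vert := (vert V F).
Implicit Types (cur : {set vert}) (A : {set F}).

Lemma Fpart_mkcluster cur A : Fpart (mkcluster Vf cur A) = A.
Proof.
apply/finset.setP=> g; rewrite inE finset.in_setU (mem_imset _ _ (@inr_inj _ _)).
have /negbTE-> : inr g \notin inl @: adjF Vf cur A by apply/imsetP=> -[].
by rewrite orbF.
Qed.

Lemma Vpart_mkcluster cur A : Vpart (mkcluster Vf cur A) = adjF Vf cur A.
Proof.
apply/finset.setP=> u; rewrite inE finset.in_setU (mem_imset _ _ (@inl_inj _ _)).
by have /negbTE-> : inl u \notin inr @: A by apply/imsetP=> -[].
Qed.

Lemma mkcluster_sub cur A : min_self_contained Vf cur A -> mkcluster Vf cur A \subset cur.
Proof.
case/and3P=> _ /and3P[/fintype.subsetP AF _ _] _; apply/fintype.subsetP => z.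
rewrite finset.in_setU => /orP[/imsetP[g /AF + ->]|/imsetP[u + ->]]; first by rewrite inE.
by rewrite inE => /andP[].
Qed.

Definition cluster_inputs (S : {set vert}) : {set V} := VS Vf (Fpart S) :\: Vpart S.

End Clusters.

Section CoarseDecomposition.
Variables (V F : finType) (Vf : F -> {set V}) (W : {set V}) (M : {set F * V}).
Hypothesis maxM : is_max_matching Vf (Bprime F W) M.
Local Notation vert := (vert V F).
Local Notation B' := (Bprime F W).
Local Notation TIs := (TI Vf W M).
Local Notation TCs := (TC Vf W M).
Local Notation TOs := (TO Vf W M).

Lemma Bprime_var u : (inl u \in B') = (u \notin W).
Proof. by rewrite inE. Qed.

Lemma Bprime_con g : inr g \in B'.
Proof. by rewrite inE. Qed.

Lemma mem_TC x : (x \in TCs) = [&& x \notin TIs, x \notin TOs & x \in B'].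
Proof. by rewrite finset.in_setD finset.in_setU negb_or -andbA. Qed.

Lemma TO_sub x : x \in TOs -> x \in B'.
Proof. by rewrite [x \in TOs]inE => /asboolP; apply: alt_reach_in. Qed.

Lemma TC_sub x : x \in TCs -> x \in B'.
Proof. by rewrite mem_TC => /and3P[]. Qed.

Lemma TI_TO_disjoint x : x \in TIs -> x \notin TOs.
Proof.
rewrite !inE => reach_var; apply/negP => /asboolP reach_con.
exact: max_matching_reach_disjoint maxM reach_var reach_con.
Qed.

Lemma TI_adj_con u g : inl u \in TIs -> u \in Vf g -> inr g \in TIs.
Proof.
rewrite !inE => reach ug.
by apply: (alt_reach_adj maxM.1 reach _ (Bprime_con g) ug) => -[].
Qed.

Lemma TO_adj_var g u : inr g \in TOs -> u \in Vf g -> u \notin W -> inl u \in TOs.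
Proof.
rewrite -Bprime_var [inr g \in _]inE [inl u \in TOs]inE => /asboolP reach ug uB.
by apply/asboolP; apply: (alt_reach_adj maxM.1 reach _ uB ug) => -[].
Qed.

Lemma TC_TO_notin_W u : inl u \in TCs :|: TOs -> u \notin W.
Proof. by rewrite finset.in_setU -Bprime_var => /orP[/TC_sub|/TO_sub]. Qed.

End CoarseDecomposition.

Section Propagation.
Variables (V F : finType) (Vf : F -> {set V}) (W : {set V}) (M : {set F * V})
  (rs : seq {set F}) (f : F) (Good : V -> Prop).
Hypothesis maxM : is_max_matching Vf (Bprime F W) M.
Hypothesis good_W : {in W, forall u, Good u}.
Hypothesis good_cluster : forall S, S \in clusters Vf W M rs ->
  (S :&: (inl @: W) == finset.set0)%SET -> (S :&: TI Vf W M == finset.set0)%SET ->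
  inr f \notin S -> {in cluster_inputs Vf S, forall u, Good u} ->
  {in Vpart S, forall u, Good u}.

Local Notation vert := (vert V F).
Local Notation B' := (Bprime F W).
Local Notation TIs := (TI Vf W M).
Local Notation TCs := (TC Vf W M).
Local Notation TOs := (TO Vf W M).
Local Notation CL := (clusters Vf W M rs).
Implicit Types (cur : {set vert}) (A : {set F}).

Definition reached (C : {set vert}) : Prop :=
  exists C0, [/\ C0 \in CL, inr f \in C0 & connect (cl_rel Vf W M rs) C0 C].

Definition settled (u : V) : Prop :=
  exists C, [/\ C \in CL, inl u \in C & (~ reached C -> Good u)].

Lemma settled_edge u D :
  settled u -> co_edge Vf W M rs (inl u) D -> ~ reached D -> Good u.
Proof.
move=> [C [CL_C uC goodC]] uD unreachedD; apply: goodC => -[C0 [CL_C0 fC0 C0C]].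
apply: unreachedD; exists C0; split=> //; apply: connect_trans C0C (connect1 _).
by rewrite /cl_rel CL_C (andP uD).1; apply/existsP; exists (inl u); rewrite uC.
Qed.

Lemma cluster_good S : S \in CL -> {subset S <= B'} -> {in S, forall z, z \notin TIs} ->
  ~ reached S -> {in cluster_inputs Vf S, forall u, Good u} ->
  {in Vpart S, forall u, Good u}.
Proof.
move=> CL_S SB STI unreached; apply: good_cluster => //.
- rewrite setI_eq0 disjoint_subset; apply/fintype.subsetP=> z /SB zB.
  by rewrite inE; apply/imsetP=> -[w wW ez]; move: zB; rewrite ez Bprime_var wW.
- by rewrite setI_eq0 disjoint_subset; apply/fintype.subsetP=> z /STI.
- by apply/negP=> fS; apply: unreached; exists S; split.
Qed.

Lemma TO_settled u : inl u \in TOs -> settled u.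
Proof.
move=> uTO; set C := [set y in TOs | connect (adjS Vf TOs) (inl u) y].
have C_TO z : z \in C -> z \in TOs by rewrite inE => /andP[].
have CL_C : C \in CL.
  by rewrite !finset.in_setU; apply/orP; left; apply/orP; right; apply/imsetP; exists (inl u).
have uC : inl u \in C by rewrite inE uTO connect0.
exists C; split=> // unreached.
apply: (cluster_good CL_C _ _ unreached); last by rewrite inE.
- by move=> z /C_TO; apply: TO_sub.
- by move=> z /C_TO; apply: contraL; apply: TI_TO_disjoint.
move=> w; rewrite finset.in_setD => /andP[wC /bigcupP[g]].
rewrite inE => gC wg; apply: good_W; apply: contraR wC => wW.
have wTO := TO_adj_var maxM (C_TO _ gC) wg wW.
rewrite [_ \in Vpart C]inE [_ \in C]inE wTO.
move: gC; rewrite inE => /andP[gTO /connect_trans]; apply.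
by apply: connect1; rewrite /adjS wTO gTO.
Qed.

Lemma TCcl_cluster C In : (C, In) \in TCcl Vf W M rs -> C \in CL.
Proof.
move=> CIn; rewrite !finset.in_setU inE; apply/orP; left; apply/orP; left.
by apply/orP; left; apply/mapP; exists (C, In).
Qed.

Lemma co_edge_TCcl C In u :
  (C, In) \in TCcl Vf W M rs -> u \in In -> co_edge Vf W M rs (inl u) C.
Proof.
move=> CIn uIn; rewrite /co_edge (TCcl_cluster CIn); apply/or3P; apply: Or31.
by apply/hasP; exists (C, In); rewrite //= eqxx; apply/existsP; exists u; rewrite uIn eqxx.
Qed.

Lemma co_edge_TO C g u : C \in CL -> inr g \in C -> inr g \in TCs -> u \in Vf g ->
  inl u \in TOs -> co_edge Vf W M rs (inl u) C.
Proof.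
move=> CL_C gC gTC ug uTO; rewrite /co_edge CL_C; apply/or3P; apply: Or32.
by apply/existsP; exists g; rewrite gC; apply/existsP; exists u; rewrite eqxx ug uTO gTC orbT.
Qed.

Lemma TC_cluster_settled cur A : cur \subset TCs -> min_self_contained Vf cur A ->
  (mkcluster Vf cur A, adjF Vf TCs A :\: adjF Vf cur A) \in TCcl Vf W M rs ->
  (forall u, inl u \in TCs -> inl u \notin cur -> settled u) ->
  {in adjF Vf cur A, forall u, settled u}.
Proof.
move=> /fintype.subsetP cur_TC minA CA settled_out u uA.
set S := mkcluster Vf cur A in CA *.
have S_TC z : z \in S -> z \in TCs.
  by move=> /(fintype.subsetP (mkcluster_sub minA))/cur_TC.
have CL_S := TCcl_cluster CA.
have A_S g : g \in A -> inr g \in S by move=> gA; rewrite finset.in_setU imset_f.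
exists S; split=> // [|unreached].
  by rewrite finset.in_setU imset_f ?orbT.
apply: (cluster_good CL_S _ _ unreached); last by rewrite Vpart_mkcluster.
- by move=> z /S_TC; apply: TC_sub.
- by move=> z /S_TC; rewrite mem_TC => /andP[].
move=> w; rewrite /cluster_inputs Fpart_mkcluster Vpart_mkcluster finset.in_setD.
case/andP=> w_out /bigcupP[g gA wg].
have [wW|wW] := boolP (w \in W); first exact: good_W.
have gTC := S_TC _ (A_S g gA).
have [wTO|wTO] := boolP (inl w \in TOs).
  exact: settled_edge (TO_settled wTO) (co_edge_TO CL_S (A_S g gA) gTC wg wTO) unreached.
have wTC : inl w \in TCs.
  rewrite mem_TC wTO Bprime_var wW !andbT; apply/negP => /(TI_adj_con maxM)/(_ wg) gTI.
  by move: gTC; rewrite mem_TC gTI.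
have w_cur : inl w \notin cur.
  by apply: contraNN w_out => wcur; rewrite inE wcur; apply/existsP; exists g; rewrite gA.
apply: settled_edge (settled_out _ wTC w_cur) (co_edge_TCcl CA _) unreached.
by rewrite finset.in_setD w_out inE wTC; apply/existsP; exists g; rewrite gA.
Qed.

Lemma TC_run_settled rs0 cur : cur \subset TCs -> TC_run Vf cur rs0 ->
  {subset TC_clusters Vf TCs cur rs0 <= TCcl Vf W M rs} ->
  (forall u, inl u \in TCs -> inl u \notin cur -> settled u) ->
  forall u, inl u \in TCs -> settled u.
Proof.
elim: rs0 cur => [|A rs0 IH] cur cur_TC /=.
  by move=> /eqP-> _ settled_out u uTC; apply: settled_out; rewrite ?finset.in_set0.
case/andP=> minA run sub settled_out.
have S_settled := TC_cluster_settled cur_TC minA (sub _ (mem_head _ _)) settled_out.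
apply: (IH (cur :\: mkcluster Vf cur A)) => //.
- exact: fintype.subset_trans (finset.subsetDl _ _) cur_TC.
- by move=> p p_cl; apply: sub; rewrite inE p_cl orbT.
move=> u uTC; rewrite finset.in_setD negb_and negbK => /orP[uS|ucur].
  by apply: S_settled; rewrite -Vpart_mkcluster inE.
exact: settled_out.
Qed.

Lemma unreached_good : TC_run Vf TCs rs -> forall v, inl v \in TCs :|: TOs ->
  ~ co_path Vf W M rs (inr f) (inl v) -> Good v.
Proof.
move=> run v vTCO no_path.
have [C [CL_C vC goodC]] : settled v.
  move: vTCO; rewrite finset.in_setU => /orP[vTC|/TO_settled//].
  by apply: (TC_run_settled (fintype.subxx _) run) => // u ->.
by apply: goodC => -[C0 [CL_C0 fC0 C0C]]; apply: no_path; exists C0, C.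
Qed.

End Propagation.

Local Open Scope classical_set_scope.

Section UniqueSolvability.
Variables (R : realType) (V : finType) (d : V -> measure_display)
  (T : forall v, measurableType (d v)) (dO : measure_display)
  (Omega : measurableType dO) (P : probability Omega R) (F : finType)
  (Vf : F -> {set V}) (W : {set V}) (X : forall v, Omega -> T v)
  (dY : measure_display) (Y : measurableType dY).

Definition determined (phi : F -> assign T -> Y) c SF SV (o : Omega) : Prop :=
  forall x1 x2 : assign T,
  let z1 := Defs.merge W (joint X o) x1 in let z2 := Defs.merge W (joint X o) x2 in
  {in (VS Vf SF :\: SV)%SET, forall u, z1 u = z2 u} ->
  {in SF, forall g, phi g z1 = c g} -> {in SF, forall g, phi g z2 = c g} ->
  {in SV, forall u, z1 u = z2 u}.

(* The solution map [gS] only reads the coordinates outside [SV]. *)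
Lemma uniquely_solvable_determined phi c SF SV :
  uniquely_solvable P Vf W X phi c SF SV -> {ae P, forall o, determined phi c SF SV o}.
Proof.
case=> gS [gS_meas gS_sol]; apply: filterS gS_sol => o sol x1 x2 /= z12 sol1 sol2 u uSV.
rewrite (proj2 (sol x1) sol1 u uSV) (proj2 (sol x2) sol2 u uSV).
exact: (proj1 (gS_meas u uSV)).
Qed.

Lemma max_uniq_solvable_determined M rs phi c :
  max_uniq_solvable P Vf W X M rs phi c ->
  {ae P, forall o S, S \in clusters Vf W M rs ->
    (S :&: (inl @: W) == finset.set0)%SET -> (S :&: TI Vf W M == finset.set0)%SET ->
    determined phi c (Fpart S) (Vpart S) o}.
Proof.
move=> [mus _]; apply: filter_forall => S.
have [[CL_S SW STI]|not_cluster] := pselect [/\ S \in clusters Vf W M rs,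
  (S :&: (inl @: W) == finset.set0)%SET & (S :&: TI Vf W M == finset.set0)%SET].
  by apply: filterS (uniquely_solvable_determined (mus S CL_S SW STI)) => o + _ _ _.
by apply: nearW => o CL_S SW STI; case: not_cluster.
Qed.

End UniqueSolvability.

Unset Implicit Arguments.
Set Strict Implicit.

Theorem theorem20
  (R : realType)
  (* variables V, constraints F, the bipartite graph B via V(f), exogenous W *)
  (V F : finType) (Vf : F -> {set V}) (W : {set V})
  (* the standard measurable spaces X_v and Y *)
  (d : V -> measure_display) (T : forall v, measurableType (d v))
  (dY : measure_display) (Y : measurableType dY)
  (hT : forall v, standard R (T v)) (hY : standard R Y)
  (* the underlying probability space and the independent variables X_W *)
  (dO : measure_display) (Omega : measurableType dO) (P : probability Omega R)
  (X : forall v, Omega -> T v)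
  (hX : forall w, w \in W -> measurable_fun setT (X w))
  (hind : independent P W X)
  (* the constraints Phi_f = <phi_f, c_f, V(f)> *)
  (phi : F -> assign T -> Y) (c : F -> Y)
  (hphi : forall f, meas_map (Vf f) (phi f))
  (* CO(B): a maximum matching M of B' and a run rs of the algorithm on B_C *)
  (M : {set F * V}) (hM : is_max_matching Vf (Bprime F W) M)
  (rs : seq {set F}) (hrs : TC_run Vf (TC Vf W M) rs)
  (hMUS : max_uniq_solvable P Vf W X M rs phi c)
  (* a solution X^* = g(X_W) *)
  (g : assign T -> assign T) (hg : is_solution P W X phi c g)
  (* the soft intervention on f *)
  (f : F) (hf : inr f \in (TC Vf W M :|: TO Vf W M)%SET)
  (phi'f : assign T -> Y) (hphi'f : meas_map (Vf f) phi'f) (c'f : Y)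
  (hMUS' : max_uniq_solvable P Vf W X M rs
             (soft_int f phi'f phi) (soft_int f c'f c))
  (* a solution X' = h(X_W) of the intervened system *)
  (h : assign T -> assign T)
  (hh : is_solution P W X (soft_int f phi'f phi) (soft_int f c'f c) h)
  (v : V) (hv : inl v \in (TC Vf W M :|: TO Vf W M)%SET)
  (hnopath : ~ co_path Vf W M rs (inr f) (inl v)) :
  {ae P, forall o, g (joint X o) v = h (joint X o) v}.
Proof.
apply: filterS3 (max_uniq_solvable_determined hMUS) hg.2 hh.2 => o det g_sol h_sol.
pose z k := Defs.merge W (joint X o) (k (joint X o)).
suff : z g v = z h v by rewrite /z /Defs.merge (negbTE (TC_TO_notin_W hv)).
apply: (unreached_good (Good := fun u => z g u = z h u) hM _ _ hrs hv hnopath).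
  by move=> u uW; rewrite /z /Defs.merge uW.
move=> S CL_S SW STI fS inputs.
have h_sol_S : {in Fpart S, forall f', phi f' (z h) = c f'}.
  move=> f' f'S; have f'f : f' != f by apply: contraNneq fS => <-; rewrite inE in f'S.
  by have := h_sol f'; rewrite /soft_int (negbTE f'f).
exact: det S CL_S SW STI _ _ inputs (fun f' _ => g_sol f') h_sol_S.
Qed.
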